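(* Let $1 \le p < \infty$. Then $J_n$ is the unique Chebyshev center of $\Omega_n$ relative to the metric space $(\Omega_n,\|\cdot\|_{\mathcal{S}_p})$ (i.e. the unique $D\in\Omega_n$ minimizing $\sup_{B\in\Omega_n}\|D-B\|_{\mathcal{S}_p}$), and the corresponding Chebyshev radius is $$ \inf_{D\in \Omega_n}\sup_{B\in\Omega_n}\|D-B\|_{\mathcal{S}_p} = (n-1)^{1/p}. $$
   Context: $\Omega_n$ denotes the set of $n\times n$ doubly stochastic matrices (nonnegative real entries, all row and column sums equal to $1$). $J_n$ is the $n\times n$ matrix with all entries equal to $1/n$. For $p\ge1$, $\|A\|_{\mathcal{S}_p} := \big(\sum_{i=1}^n\sigma_i(A)^p\big)^{1/p}$ where $\sigma_i(A)$ are the singular values of $A$. Given a constraint set $\mathcal{R}\subseteq M_n(\mathbb{R})$ and a norm, the Chebyshev radius of $\Omega_n$ is $\inf_{A\in\mathcal{R}}\sup_{B\in\Omega_n}\|A-B\|$ and a Chebyshev center is any $A\in\mathcal{R}$ attaining this infimum; ''relative to the metric space $(\Omega_n,\|\cdot\|)$'' means $\mathcal{R}=\Omega_n$. *)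

From HB Require Import structures.
From mathcomp Require Import all_boot all_order all_algebra.
From mathcomp Require Import all_classical all_reals all_analysis.
Set Implicit Arguments. Unset Strict Implicit. Unset Printing Implicit Defensive.
Import Order.TTheory GRing.Theory Num.Theory.
Local Open Scope ring_scope.
Local Open Scope classical_set_scope.

Definition doubly_stochastic {R : realType} (n : nat) (A : 'M[R]_n) : Prop :=
  (forall i j, 0 <= A i j) /\
  (forall i, \sum_(j < n) A i j = 1) /\
  (forall j, \sum_(i < n) A i j = 1).

Definition Omega (R : realType) (n : nat) : set 'M[R]_n :=
  [set A | doubly_stochastic A]. 
Arguments Omega : clear implicits.

Definition Jmx (R : realType) (n : nat) : 'M[R]_n := const_mx (n%:R)^-1.
Arguments Jmx : clear implicits.

(* s is the (multiset of) singular values of A: nonnegative reals whose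
   squares are exactly the eigenvalues (with algebraic multiplicity) of A^T A *)
Definition is_singular_values {R : realType} (n : nat) (A : 'M[R]_n)
  (s : 'rV[R]_n) : Prop :=
  (forall i, 0 <= s 0 i) /\
  char_poly (A^T *m A) = \prod_(i < n) ('X - ((s 0 i) ^+ 2)%:P).

Definition singular_values {R : realType} (n : nat) (A : 'M[R]_n) : 'rV[R]_n :=
  xget 0 [set s | is_singular_values A s].

Definition schatten {R : realType} (p : R) (n : nat) (A : 'M[R]_n) : R :=
  (\sum_(i < n) (singular_values A 0 i) `^ p) `^ p^-1.

Definition far_radius {R : realType} (p : R) (n : nat) (D : 'M[R]_n) : R :=
  sup [set schatten p (D - B) | B in Omega R n].

Definition cheb_radius {R : realType} (p : R) (n : nat) : R :=
  inf [set far_radius p D | D in Omega R n].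

Definition cheb_center {R : realType} (p : R) (n : nat) (D : 'M[R]_n) : Prop :=
  Omega R n D /\ far_radius p D = cheb_radius p n.

(* For a doubly stochastic B, the rows of J_n - B sum to 0, so J_n - B has
   a zero singular value, and J_n - B is a contraction, so its other n - 1
   singular values are at most 1: hence ||J_n - B||_p <= (n-1)^(1/p), with
   equality at B = I.  Conversely, if D is doubly stochastic and D <> J_n,
   some permutation sigma has sum_i D (sigma i) i < 1: otherwise every
   permutation sum equals 1, which forces D r c + D r' c' = D r' c + D r c'
   for all entries and then D = J_n.  With P the matrix of sigma,
   tr (P (P^T - D)) > n - 1, and since the trace is at most the sum of the
   singular values, one of which vanishes, Bernoulli's inequality
   x^p >= 1 + p (x - 1) gives ||D - P^T||_p > (n-1)^(1/p). *)

From mathcomp Require Import all_boot all_order all_algebra.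
From mathcomp Require Import all_classical all_reals all_analysis.
From mathcomp Require Import complex spectral sesquilinear.
From mathcomp Require Import lra ring perm.
Set Implicit Arguments.
Unset Strict Implicit.
Unset Printing Implicit Defensive.
Import Order.TTheory GRing.Theory Num.Theory.
Local Open Scope ring_scope.

Lemma char_poly_similar (F : fieldType) m (V U D : 'M[F]_m) :
  V *m U = 1%:M -> char_poly (V *m D *m U) = char_poly D.
Proof.
move=> VU; rewrite /char_poly /char_poly_mx.
set Vp := map_mx polyC V; set Up := map_mx polyC U.
have VUp : Vp *m Up = 1%:M by rewrite -map_mxM VU map_mx1.
have -> : 'X%:M - map_mx polyC (V *m D *m U) =
          Vp *m ('X%:M - map_mx polyC D) *m Up.
  rewrite !map_mxM mulmxBr mulmxBl -!mulmxA -scalar_mxC !mulmxA.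
  by rewrite VUp mul1mx.
by rewrite !det_mulmx mulrAC -det_mulmx VUp det1 mul1r.
Qed.

Lemma conj_map_real_complex (R : realType) m k (A : 'M[R]_(m, k)) :
  map_mx Num.Def.conjC (map_mx (real_complex R) A) = map_mx (real_complex R) A.
Proof.
apply/matrixP=> i j; rewrite !mxE /= conj_Creal //.
by apply/complex_realP; eexists.
Qed.

Section GramSpectrum.
Variables (R : realType) (n : nat) (A : 'M[R]_n).
Local Notation toC := (real_complex R).
Local Open Scope sesquilinear_scope.

Let Ac := map_mx toC A.
Let G := Ac^T *m Ac.
Let U := spectralmx G.
Let d := spectral_diag G.
Let W := U *m Ac^T.

Let gram_spectral : G = U^t* *m diag_mx d *m U.
Proof.
have G_normal : G \is normalmx.
  by rewrite qualifE /G trmx_mul trmxK map_mxM map_trmx !conj_map_real_complex.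
rewrite -invmx_unitary ?spectral_unitarymx //.
exact/orthomx_spectralP.
Qed.

Let spectral_mulmx_adj : U^t* *m U = 1%:M.
Proof.
by rewrite -invmx_unitary ?spectral_unitarymx // mulVmx // unitarymx_unit //
  spectral_unitarymx.
Qed.

Let gram_rows : W *m W^t* = diag_mx d.
Proof.
have UUt : U *m U^t* = 1%:M by apply/unitarymxP/spectral_unitarymx.
rewrite /W trmx_mul map_mxM trmxK map_trmx conj_map_real_complex.
rewrite mulmxA -(mulmxA U).
have -> : A ^t toC *m map_mx toC A = G by rewrite /G /Ac map_trmx.
rewrite gram_spectral.
by rewrite !mulmxA UUt mul1mx -mulmxA UUt mulmx1.
Qed.

Let gram_eigen_dotmx i : d 0 i = dotmx (row i W) (row i W).
Proof.
rewrite dotmxE; have /matrixP/(_ i i) := gram_rows.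
rewrite !mxE eqxx mulr1n => <-.
by apply: eq_bigr => k _; rewrite !mxE.
Qed.

Let trace_dotmx_rows : toC (\tr A) = \sum_i dotmx (row i W) (row i U).
Proof.
rewrite -trace_map_mx -/Ac -mxtrace_tr.
have -> : \tr Ac^T = \tr (W *m U^t*).
  rewrite /W mxtrace_mulC mulmxA mxtrace_mulC mulmxA -mulmxA.
  by rewrite spectral_mulmx_adj mulmx1.
rewrite /mxtrace; apply: eq_bigr => i _; rewrite dotmxE !mxE.
by apply: eq_bigr => k _; rewrite !mxE.
Qed.

Let dotmx_rows_sqr_le i : `|dotmx (row i W) (row i U)| ^+ 2 <= d 0 i.
Proof.
have Ui1 : dotmx (row i U) (row i U) = 1.
  by have := row_unitarymxP (spectral_unitarymx G) i i; rewrite eqxx.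
have CS : `|dotmx (row i W) (row i U)| ^+ 2 <=
    dotmx (row i W) (row i W) * dotmx (row i U) (row i U) :=
  (CauchySchwarz (dotmx (n:=n)) (row i W) (row i U)).1.
by rewrite -gram_eigen_dotmx Ui1 mulr1 in CS.
Qed.

(* Writing tr A as the sum of the inner products of the rows of W with the
   unit rows of U, Cauchy-Schwarz bounds the i-th term by sqrt (d i). *)
Lemma trace_le_sqrt_gram_spectrum : exists e : 'rV[R]_n,
  [/\ forall i, 0 <= e 0 i,
      char_poly (A^T *m A) = \prod_i ('X - (e 0 i)%:P)
    & \tr A <= \sum_i Num.sqrt (e 0 i)].
Proof.
have d_ge0 i : 0 <= d 0 i by rewrite gram_eigen_dotmx dnorm_ge0.
pose e := \row_i complex.Re (d 0 i).
have de i : d 0 i = toC (e 0 i) by rewrite mxE RRe_real // ger0_real.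
have e_ge0 i : 0 <= e 0 i by rewrite -ler0c -de.
exists e; split=> //.
  apply: (@map_poly_inj _ _ toC); rewrite map_char_poly.
  have -> : map_mx toC (A^T *m A) = G by rewrite /G /Ac map_mxM map_trmx.
  rewrite gram_spectral char_poly_similar ?spectral_mulmx_adj //.
  rewrite char_poly_trig ?diag_mx_is_trig // rmorph_prod.
  apply: eq_bigr => i _; rewrite mxE eqxx mulr1n de.
  exact/esym/map_polyXsubC.
have ReD : {morph (@complex.Re R) : x y / x + y} by move=> [? ?] [? ?].
have := congr1 (@complex.Re R) trace_dotmx_rows => /= ->.
rewrite (big_morph _ ReD (erefl : complex.Re (0 : R[i]) = 0)).
apply: ler_sum => i _.
have := dotmx_rows_sqr_le i; rewrite -add_Re2_Im2 de lecR => le_sqr.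
apply: (le_trans (ler_norm _)); rewrite -sqrtr_sqr; apply: ler_wsqrtr.
by apply: le_trans le_sqr; rewrite lerDl sqr_ge0.
Qed.

End GramSpectrum.

Section SingularValues.
Variables (R : realType) (n : nat).

Lemma singular_values_exist (A : 'M[R]_n) : exists s, is_singular_values A s.
Proof.
have [e [e_ge0 chiE _]] := trace_le_sqrt_gram_spectrum A.
exists (\row_i Num.sqrt (e 0 i)); split=> [i|]; first by rewrite mxE sqrtr_ge0.
by rewrite chiE; apply: eq_bigr => i _; rewrite mxE sqr_sqrtr.
Qed.

Lemma singular_valuesP (A : 'M[R]_n) : is_singular_values A (singular_values A).
Proof. exact: (xgetPex 0 (singular_values_exist A)). Qed.

(* The squares of s and the spectrum e of [trace_le_sqrt_gram_spectrum] are
   the roots of the same split polynomial, hence equal up to a permutation. *)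
Lemma trace_le_sum_singular_values (A : 'M[R]_n) s : is_singular_values A s ->
  \tr A <= \sum_i s 0 i.
Proof.
move=> [s_ge0 chiE]; have [e [_ chiE' trA]] := trace_le_sqrt_gram_spectrum A.
have e_perm :
    perm_eq [seq s 0 i ^+ 2 | i <- enum 'I_n] [seq e 0 i | i <- enum 'I_n].
  by apply: prod_XsubC_eq; rewrite !big_map -chiE -chiE'.
have sE :
    \sum_i s 0 i = \sum_(x <- [seq s 0 i ^+ 2 | i <- enum 'I_n]) Num.sqrt x.
  rewrite big_map big_enum; apply: eq_bigr => i _.
  by rewrite sqrtr_sqr ger0_norm.
by rewrite sE (perm_big _ e_perm) big_map big_enum.
Qed.

Definition sqnorm (v : 'rV[R]_n) := \sum_j v 0 j ^+ 2.

Lemma sqnorm_ge0 v : 0 <= sqnorm v.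
Proof. by apply: sumr_ge0 => j _; apply: sqr_ge0. Qed.

Lemma sqnorm_gt0 v : v != 0 -> 0 < sqnorm v.
Proof.
move=> v_neq0; rewrite lt_def sqnorm_ge0 andbT; apply: contra v_neq0 => /eqP.
move=> /psumr_eq0P v0; apply/eqP/rowP => j; rewrite mxE.
by apply/eqP; rewrite -sqrf_eq0 v0 // => k _; apply: sqr_ge0.
Qed.

Lemma mulmx_tr_sqnorm (w : 'rV[R]_n) : (w *m w^T) 0 0 = sqnorm w.
Proof. by rewrite mxE; apply: eq_bigr => j _; rewrite mxE expr2. Qed.

Lemma root_char_poly_gram (X : 'M[R]_n) s i : is_singular_values X s ->
  root (char_poly (X^T *m X)) (s 0 i ^+ 2).
Proof.
move=> [_ ->]; rewrite /root horner_prod; apply/eqP.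
by rewrite (bigD1 i) //= hornerXsubC subrr mul0r.
Qed.

(* A singular value s_i of X is an eigenvalue s_i^2 of X^T X, whose
   eigenvectors v satisfy s_i^2 |v|^2 = |v X^T|^2. *)
Lemma sqr_singular_value_le (X : 'M[R]_n) K s : is_singular_values X s ->
  (forall v, sqnorm (v *m X^T) <= K * sqnorm v) -> forall i, s 0 i ^+ 2 <= K.
Proof.
move=> sX XK i; have := root_char_poly_gram i sX.
rewrite -eigenvalue_root_char => /eigenvalueP [v vE v_neq0].
have quadE : sqnorm (v *m X^T) = s 0 i ^+ 2 * sqnorm v.
  rewrite -mulmx_tr_sqnorm trmx_mul trmxK mulmxA -(mulmxA v) vE.
  by rewrite -scalemxAl mxE mulmx_tr_sqnorm.
by rewrite -(ler_pM2r (sqnorm_gt0 v_neq0)) -quadE XK.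
Qed.

Lemma singular_value_eq0_rowsum0 (X : 'M[R]_n) s : (0 < n)%N ->
  is_singular_values X s -> (forall i, \sum_j X i j = 0) ->
  exists i, s 0 i = 0.
Proof.
move=> n_gt0 [_ chiE] X_row0.
have : eigenvalue (X^T *m X) 0.
  apply/eigenvalueP; exists (const_mx 1 : 'rV[R]_n).
    rewrite scale0r mulmxA.
    suff -> : (const_mx 1 : 'rV[R]_n) *m X^T = 0 by rewrite mul0mx.
    apply/rowP => j; rewrite !mxE; apply: etrans (X_row0 j).
    by apply: eq_bigr => k _; rewrite !mxE mul1r.
  apply/eqP => /matrixP /(_ 0 (Ordinal n_gt0)) /eqP.
  by rewrite !mxE oner_eq0.
rewrite eigenvalue_root_char chiE /root horner_prod => /prodf_eq0 [i _].
by rewrite hornerXsubC sub0r oppr_eq0 sqrf_eq0 => /eqP; exists i.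
Qed.

End SingularValues.

Lemma sqr_convex_comb_le (R : realFieldType) (I : finType) (w x : I -> R) :
  (forall i, 0 <= w i) -> \sum_i w i = 1 ->
  (\sum_i w i * x i) ^+ 2 <= \sum_i w i * x i ^+ 2.
Proof.
move=> w_ge0 w1; set m := \sum_i w i * x i.
have varE : \sum_i w i * (x i - m) ^+ 2 = \sum_i w i * x i ^+ 2 - m ^+ 2.
  rewrite (eq_bigr (fun i => w i * x i ^+ 2 - (m *+ 2) * (w i * x i)
     + m ^+ 2 * w i)); last by move=> i _; ring.
  by rewrite big_split /= sumrB -!mulr_sumr w1 -/m; ring.
rewrite -subr_ge0 -varE.
by apply: sumr_ge0 => i _; rewrite mulr_ge0 ?sqr_ge0.
Qed.

Lemma powR_ge_bernoulli (R : realType) (x p : R) : 0 <= x -> 1 <= p ->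
  1 + p * (x - 1) <= x `^ p.
Proof.
move=> x_ge0 p_ge1.
have [->|p_neq1] := eqVneq p 1; first by rewrite powRr1 // mul1r addrC subrK.
have p_gt1 : 1 < p by rewrite lt_neqAle eq_sym p_neq1.
have p_gt0 : 0 < p by lra.
set q := p / (p - 1).
have q_gt0 : 0 < q by rewrite divr_gt0 // subr_gt0.
have pq : p^-1 + q^-1 = 1 by rewrite /q invf_div; field; lra.
(* Young's inequality x * 1 <= x^p / p + 1^q / q *)
have := conjugate_powR x_ge0 ler01 p_gt0 q_gt0 pq.
rewrite mulr1 powR1 /q invf_div -(ler_pM2l p_gt0).
have -> : p * (x `^ p / p + 1 * ((p - 1) / p)) = x `^ p + (p - 1).
  by field; lra.
lra.
Qed.

Section DoublyStochastic.
Variables (R : realType) (n : nat).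

Lemma mulmx_trE (v : 'rV[R]_n) (B : 'M[R]_n) i :
  (v *m B^T) 0 i = \sum_j v 0 j * B i j.
Proof. by rewrite mxE; apply: eq_bigr => j _; rewrite mxE. Qed.

Lemma ds_sqnorm_le (B : 'M[R]_n) v : doubly_stochastic B ->
  sqnorm (v *m B^T) <= sqnorm v.
Proof.
move=> [B_ge0 [B_row B_col]].
apply: (@le_trans _ _ (\sum_i \sum_j B i j * v 0 j ^+ 2)).
  apply: ler_sum => i _; rewrite mulmx_trE.
  under eq_bigr do rewrite mulrC.
  exact: sqr_convex_comb_le.
rewrite exchange_big /=; under eq_bigr do rewrite -mulr_suml B_col mul1r.
exact: lexx.
Qed.

Lemma Jmx_sub_ds_sqnorm_le (B : 'M[R]_n) v : (0 < n)%N ->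
  doubly_stochastic B -> sqnorm (v *m (Jmx R n - B)^T) <= sqnorm v.
Proof.
move=> n_gt0 dsB; have [_ [_ B_col]] := dsB.
apply: le_trans (ds_sqnorm_le v dsB).
set S := \sum_j v 0 j; set a := S / n%:R.
have aN : a * n%:R = S by rewrite /a divfK // pnatr_eq0 -lt0n.
have JBE i : (v *m (Jmx R n - B)^T) 0 i = a - (v *m B^T) 0 i.
  rewrite !mulmx_trE (eq_bigr (fun j => v 0 j * n%:R^-1 - v 0 j * B i j)).
    by rewrite sumrB -mulr_suml.
  by move=> j _; rewrite !mxE mulrBr.
have sumBE : \sum_i (v *m B^T) 0 i = S.
  rewrite (eq_bigr _ (fun i _ => mulmx_trE v B i)) exchange_big /=.
  by apply: eq_bigr => j _; rewrite -mulr_sumr B_col mulr1.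
rewrite /sqnorm (eq_bigr _ (fun i _ => congr1 (fun x => x ^+ 2) (JBE i))).
rewrite (eq_bigr (fun i => (v *m B^T) 0 i ^+ 2 - (a *+ 2) * (v *m B^T) 0 i
  + a ^+ 2)); last by move=> i _; ring.
rewrite big_split /= sumrB -mulr_sumr sumBE sumr_const card_ord.
rewrite -addrA gerDl -mulr_natr -aN mulr2n.
have : 0 <= n%:R :> R by [].
nra.
Qed.

Lemma ds_sub_sqnorm_le (D B : 'M[R]_n) v : doubly_stochastic D ->
  doubly_stochastic B -> sqnorm (v *m (D - B)^T) <= 4 * sqnorm v.
Proof.
move=> dsD dsB.
apply: (@le_trans _ _ (2 * sqnorm (v *m D^T) + 2 * sqnorm (v *m B^T))).
  rewrite /sqnorm !mulr_sumr -big_split /=; apply: ler_sum => i _.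
  have -> : (v *m (D - B)^T) 0 i = (v *m D^T) 0 i - (v *m B^T) 0 i.
    by rewrite linearB /= mulmxBr !mxE.
  set x := (v *m D^T) 0 i; set y := (v *m B^T) 0 i.
  have : 0 <= (x + y) ^+ 2 by exact: sqr_ge0.
  nra.
have := ds_sqnorm_le v dsD; have := ds_sqnorm_le v dsB; lra.
Qed.

Lemma rowsum_sub_ds (D B : 'M[R]_n) : doubly_stochastic D ->
  doubly_stochastic B -> forall i, \sum_j (D - B) i j = 0.
Proof.
move=> [_ [D_row _]] [_ [B_row _]] i.
under eq_bigr do rewrite !mxE.
by rewrite sumrB D_row B_row subrr.
Qed.

Lemma perm_mx_ds (s : 'S_n) : doubly_stochastic (perm_mx s : 'M[R]_n).
Proof.
have sE i j : (perm_mx s : 'M[R]_n) i j = (s i == j)%:R.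
  by rewrite perm_mxEsub !mxE.
split; first by move=> i j; rewrite sE ler0n.
split=> [i|j].
  rewrite (bigD1 (s i)) //= big1 ?sE ?eqxx ?addr0 // => j.
  by rewrite sE eq_sym => /negbTE ->.
rewrite (bigD1 ((s^-1)%g j)) //= big1 ?sE ?permKV ?eqxx ?addr0 // => i.
by rewrite sE; have [<-|//] := eqVneq (s i) j; rewrite permK eqxx.
Qed.

Lemma Jmx_ds : (0 < n)%N -> doubly_stochastic (Jmx R n).
Proof.
move=> n_gt0.
have sumJ : \sum_(j < n) (n%:R : R)^-1 = 1.
  by rewrite sumr_const card_ord -[_ *+ n]mulr_natl mulfV // pnatr_eq0 -lt0n.
split; first by move=> i j; rewrite mxE invr_ge0 ler0n.
by split=> i; rewrite -[RHS]sumJ; apply: eq_bigr => j _; rewrite mxE.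
Qed.

End DoublyStochastic.

Section PermutationSums.
Variables (R : realType) (n' : nat).
Local Notation n := n'.+1.
Variable D : 'M[R]_n.
Hypothesis dsD : doubly_stochastic D.

Definition perm_sum (s : 'S_n) := \sum_i D (s i) i.

Definition cyclic_shift (k : 'I_n) : 'S_n := perm (@addrI _ k).

(* The n permutations s * cyclic_shift k cover every entry of each column
   exactly once. *)
Lemma sum_perm_sum_shift (s : 'S_n) :
  \sum_k perm_sum (s * cyclic_shift k)%g = n%:R.
Proof.
have [_ [_ D_col]] := dsD.
rewrite /perm_sum exchange_big /= (eq_bigr (fun _ => 1)).
  by rewrite sumr_const card_ord.
move=> i _; rewrite -(D_col i) [RHS](reindex_inj (addIr (s i))) /=.
by apply: eq_bigr => k _; rewrite permM permE.
Qed.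

Lemma perm_sum_ge1_eq1 :
  (forall s, 1 <= perm_sum s) -> forall s, perm_sum s = 1.
Proof.
move=> sum_ge1 s.
have excess0 : \sum_k (perm_sum (s * cyclic_shift k)%g - 1) = 0.
  by rewrite sumrB sum_perm_sum_shift sumr_const card_ord subrr.
have excess_ge0 k : 0 <= perm_sum (s * cyclic_shift k)%g - 1.
  by rewrite subr_ge0.
have /eqP := psumr_eq0P (fun k _ => excess_ge0 k) excess0 (i := 0) isT.
rewrite subr_eq0 => /eqP <-.
by apply: eq_bigr => i _; rewrite permM permE add0r.
Qed.

Lemma perm_sum_eq1_swap (s : 'S_n) a b :
  a != b -> (forall s, perm_sum s = 1) ->
  D (s b) a + D (s a) b = D (s a) a + D (s b) b.
Proof.
move=> ab sum1.
have splitE t : perm_sum t =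
    D (t a) a + D (t b) b + \sum_(i | (i != a) && (i != b)) D (t i) i.
  by rewrite /perm_sum (bigD1 a) //= (bigD1 b) 1?eq_sym //= addrA.
have restE : \sum_(i | (i != a) && (i != b)) D ((tperm a b * s)%g i) i =
             \sum_(i | (i != a) && (i != b)) D (s i) i.
  by apply: eq_bigr => i /andP [ia ib]; rewrite permM tpermD // eq_sym.
have := sum1 s; have := sum1 (tperm a b * s)%g.
rewrite !splitE restE !permM tpermL tpermR.
lra.
Qed.

Lemma perm_sum_eq1_exchange : (forall s, perm_sum s = 1) -> forall r1 r2 c1 c2,
  D r1 c1 + D r2 c2 = D r2 c1 + D r1 c2.
Proof.
move=> sum1 r1 r2 c1 c2.
have [->|r12] := eqVneq r1 r2; first by rewrite addrC.
have [->|c12] := eqVneq c1 c2; first by rewrite addrC.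
pose y := tperm c1 r1 c2.
pose s := (tperm c1 r1 * tperm y r2)%g.
have y_neq_r1 : y != r1.
  by rewrite -[r1 in _ != r1](tpermL c1 r1) (inj_eq (can_inj (tpermK c1 r1)))
    eq_sym.
have sc1 : s c1 = r1 by rewrite permM tpermL tpermD // eq_sym.
have sc2 : s c2 = r2 by rewrite permM -/y tpermL.
by have := perm_sum_eq1_swap s c12 sum1; rewrite sc1 sc2 addrC => ->.
Qed.

(* Summing the exchange identity over r2 and c2 gives n (n D r c + 1) = 2 n. *)
Lemma perm_sum_ge1_Jmx : (forall s, 1 <= perm_sum s) -> D = Jmx R n.
Proof.
move=> sum_ge1; have exchD := perm_sum_eq1_exchange (perm_sum_ge1_eq1 sum_ge1).
have [_ [D_row D_col]] := dsD.
apply/matrixP => r c; rewrite mxE.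
have N_gt0 : 0 < n%:R :> R by rewrite ltr0n.
have : \sum_(r2 < n) \sum_(c2 < n) (D r c + D r2 c2) =
       \sum_(r2 < n) \sum_(c2 < n) (D r2 c + D r c2).
  by apply: eq_bigr => r2 _; apply: eq_bigr => c2 _; apply: exchD.
have lhsE : \sum_(r2 < n) \sum_(c2 < n) (D r c + D r2 c2) =
            (D r c * n%:R + 1) * n%:R.
  under eq_bigr do
    rewrite big_split /= sumr_const card_ord D_row -[_ *+ n]mulr_natr.
  by rewrite sumr_const card_ord -[_ *+ n]mulr_natr.
have rhsE : \sum_(r2 < n) \sum_(c2 < n) (D r2 c + D r c2) = n%:R + n%:R.
  under eq_bigr do
    rewrite big_split /= sumr_const card_ord D_row -[_ *+ n]mulr_natr.
  by rewrite big_split /= -mulr_suml D_col mul1r sumr_const card_ord.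
rewrite lhsE rhsE => sumE; have DN : D r c * n%:R = 1 by nra.
by apply: (mulIf (lt0r_neq0 N_gt0)); rewrite DN mulVf // lt0r_neq0.
Qed.

End PermutationSums.

Lemma exists_perm_sum_lt1 (R : realType) (n : nat) (D : 'M[R]_n) : (0 < n)%N ->
  doubly_stochastic D -> D <> Jmx R n -> exists s : 'S_n, \sum_i D (s i) i < 1.
Proof.
case: n D => [//|n'] D _ dsD D_neqJ.
apply: contrapT => no_s; apply/D_neqJ/(perm_sum_ge1_Jmx dsD) => s.
by rewrite leNgt; apply/negP => sum_lt1; apply: no_s; exists s.
Qed.

Section ChebyshevRadius.
Local Open Scope classical_set_scope.
Variables (R : realType) (n : nat) (p : R).
Hypotheses (n_gt0 : (0 < n)%N) (p_ge1 : 1 <= p).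

Let p_gt0 : 0 < p. Proof. exact: lt_le_trans ltr01 p_ge1. Qed.

Let sum_neq_const (i0 : 'I_n) : \sum_(i | i != i0) (1 : R) = n.-1%:R.
Proof. by rewrite sumr_const cardC1 card_ord. Qed.

Lemma sum_sv_powR_Jmx_sub_le (B : 'M[R]_n) : doubly_stochastic B ->
  \sum_i singular_values (Jmx R n - B) 0 i `^ p <= n.-1%:R.
Proof.
move=> dsB; have sJB := singular_valuesP (Jmx R n - B).
set s := singular_values _ in sJB *; have [s_ge0 _] := sJB.
have s_le1 i : s 0 i <= 1.
  rewrite -(expr_le1 (n := 2)) //; apply: sqr_singular_value_le sJB _ i => v.
  by rewrite mul1r Jmx_sub_ds_sqnorm_le.
have [i0 si0] := singular_value_eq0_rowsum0 n_gt0 sJB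
  (rowsum_sub_ds (Jmx_ds R n_gt0) dsB).
rewrite (bigD1 i0) //= si0 powR0 ?gt_eqF // add0r -(sum_neq_const i0).
apply: ler_sum => i _; have [<-|si_gt0] := eqVneq 0 (s 0 i).
  by rewrite powR0 ?gt_eqF.
apply: le_trans (s_le1 i); apply: ge1r_powR => //.
by rewrite s_le1 lt_def eq_sym si_gt0 s_ge0.
Qed.

(* With P the matrix of s, P (P^T - D) has the same singular values as
   D - P^T and trace n - sum_i D (s i) i. *)
Lemma sum_sv_powR_sub_perm_ge (D : 'M[R]_n) (s : 'S_n) : doubly_stochastic D ->
  n.-1%:R + p * (1 - \sum_i D (s i) i) <=
  \sum_i singular_values (D - (perm_mx s)^T) 0 i `^ p.
Proof.
move=> dsD; set P : 'M[R]_n := perm_mx s.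
have dsPt : doubly_stochastic P^T by rewrite tr_perm_mx; apply: perm_mx_ds.
have PtP : P^T *m P = 1%:M by rewrite tr_perm_mx -perm_mxM mulVg perm_mx1.
have PPt : P *m P^T = 1%:M by rewrite tr_perm_mx -perm_mxM mulgV perm_mx1.
have sDP := singular_valuesP (D - P^T).
set t := singular_values _ in sDP *; have [t_ge0 chiE] := sDP.
have sPDP : is_singular_values (P *m (P^T - D)) t.
  split=> //; rewrite -chiE trmx_mul -mulmxA (mulmxA P^T) PtP mul1mx.
  by rewrite -opprB mulmxN linearN /= mulNmx opprK.
have trE : \tr (P *m (P^T - D)) = n%:R - \sum_i D (s i) i.
  rewrite mulmxBr PPt linearB /= mxtrace1 /P -row_permE.
  by congr (_ - _); apply: eq_bigr => i _; rewrite mxE.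
have := trace_le_sum_singular_values sPDP; rewrite trE.
have [i0 ti0] := singular_value_eq0_rowsum0 n_gt0 sDP (rowsum_sub_ds dsD dsPt).
rewrite [X in _ <= X -> _](bigD1 i0) //= ti0 add0r => trace_le.
rewrite [X in _ <= X](bigD1 i0) //= ti0 powR0 ?gt_eqF // add0r.
apply: le_trans (ler_sum _ (fun i _ => powR_ge_bernoulli (t_ge0 i) p_ge1)).
rewrite big_split /= sum_neq_const -mulr_sumr sumrB sum_neq_const.
have nE : (n%:R : R) = n.-1%:R + 1 by rewrite natr1 prednK.
rewrite nE in trace_le; have := ltW p_gt0; nra.
Qed.

Lemma schatten_le (X : 'M[R]_n) x : 0 <= x ->
  \sum_i singular_values X 0 i `^ p <= x -> schatten p X <= x `^ p^-1.
Proof.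
move=> x_ge0 le_x; apply: ge0_ler_powR => //; first by rewrite invr_ge0 ltW.
by rewrite nnegrE sumr_ge0 // => i _; apply: powR_ge0.
Qed.

Lemma schatten_ge (X : 'M[R]_n) x : 0 <= x ->
  x <= \sum_i singular_values X 0 i `^ p -> x `^ p^-1 <= schatten p X.
Proof.
move=> x_ge0 x_le; apply: ge0_ler_powR => //; first by rewrite invr_ge0 ltW.
by rewrite nnegrE sumr_ge0 // => i _; apply: powR_ge0.
Qed.

Lemma schatten_gt (X : 'M[R]_n) x : 0 <= x ->
  x < \sum_i singular_values X 0 i `^ p -> x `^ p^-1 < schatten p X.
Proof.
move=> x_ge0 x_lt; apply: gt0_ltr_powR => //; first by rewrite invr_gt0.
by rewrite nnegrE sumr_ge0 // => i _; apply: powR_ge0.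
Qed.

Lemma schatten_sub_ds_le (D B : 'M[R]_n) : doubly_stochastic D ->
  doubly_stochastic B -> schatten p (D - B) <= (2 `^ p *+ n) `^ p^-1.
Proof.
move=> dsD dsB; apply: schatten_le; first by rewrite mulrn_wge0 // powR_ge0.
have sDB := singular_valuesP (D - B).
set s := singular_values _ in sDB *; have [s_ge0 _] := sDB.
have -> : 2 `^ p *+ n = \sum_(i < n) 2 `^ p by rewrite sumr_const card_ord.
apply: ler_sum => i _.
apply: ge0_ler_powR; rewrite ?nnegrE ?(ltW p_gt0) //.
have := sqr_singular_value_le sDB (fun v => ds_sub_sqnorm_le v dsD dsB) i.
have := s_ge0 i; nra.
Qed.

Lemma has_sup_schatten_sub_ds (D : 'M[R]_n) : doubly_stochastic D ->
  has_sup [set schatten p (D - B) | B in Omega R n].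
Proof.
move=> dsD; split; first by exists (schatten p (D - Jmx R n)), (Jmx R n);
  first exact: Jmx_ds.
by exists ((2 `^ p *+ n) `^ p^-1) => _ [B dsB <-]; apply: schatten_sub_ds_le.
Qed.

Lemma far_radius_ge (D B : 'M[R]_n) :
  doubly_stochastic D -> doubly_stochastic B ->
  schatten p (D - B) <= far_radius p D.
Proof.
move=> dsD dsB; apply: (sup_upper_bound (has_sup_schatten_sub_ds dsD)).
by exists B.
Qed.

Lemma far_radius_Jmx : far_radius p (Jmx R n) = n.-1%:R `^ p^-1.
Proof.
have dsJ := Jmx_ds R n_gt0.
apply/eqP; rewrite eq_le; apply/andP; split.
  apply: ge_sup; first by case: (has_sup_schatten_sub_ds dsJ).
  move=> _ [B dsB <-]; apply: schatten_le; first exact: ler0n.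
  exact: sum_sv_powR_Jmx_sub_le.
have dsI : doubly_stochastic (perm_mx 1 : 'M[R]_n)^T.
  by rewrite tr_perm_mx; apply: perm_mx_ds.
apply: le_trans (far_radius_ge dsJ dsI).
apply: schatten_ge; first exact: ler0n.
apply: le_trans (sum_sv_powR_sub_perm_ge 1 dsJ).
have [_ [J_row _]] := dsJ.
have -> : \sum_i Jmx R n ((1 : 'S_n)%g i) i = 1.
  by rewrite -(J_row (Ordinal n_gt0)); apply: eq_bigr => i _; rewrite !mxE.
by rewrite subrr mulr0 addr0.
Qed.

Lemma far_radius_gt (D : 'M[R]_n) : doubly_stochastic D -> D <> Jmx R n ->
  n.-1%:R `^ p^-1 < far_radius p D.
Proof.
move=> dsD D_neqJ; have [s sum_lt1] := exists_perm_sum_lt1 n_gt0 dsD D_neqJ.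
apply: lt_le_trans (far_radius_ge dsD (_ : doubly_stochastic (perm_mx s)^T)).
  apply: schatten_gt; first exact: ler0n.
  apply: lt_le_trans (sum_sv_powR_sub_perm_ge s dsD).
  by rewrite ltrDl mulr_gt0 // subr_gt0.
by rewrite tr_perm_mx; apply: perm_mx_ds.
Qed.

Lemma cheb_radiusE : cheb_radius p n = n.-1%:R `^ p^-1.
Proof.
have dsJ := Jmx_ds R n_gt0.
have lb : lbound [set far_radius p D | D in Omega R n] (n.-1%:R `^ p^-1).
  move=> _ [D dsD <-]; have [->|D_neqJ] := pselect (D = Jmx R n).
    by rewrite far_radius_Jmx.
  exact/ltW/far_radius_gt.
apply/eqP; rewrite eq_le; apply/andP; split.
  rewrite -far_radius_Jmx; apply: ge_inf; first by exists (n.-1%:R `^ p^-1).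
  by exists (Jmx R n).
by apply: lb_le_inf => //; exists (far_radius p (Jmx R n)), (Jmx R n).
Qed.

End ChebyshevRadius.

Theorem mainTheorem9 (R : realType) (n : nat) (p : R) :
  (0 < n)%N -> 1 <= p ->
  (forall D : 'M[R]_n, cheb_center p D <-> D = Jmx R n) /\
  cheb_radius p n = (n.-1)%:R `^ p^-1.
Proof.
move=> n_gt0 p_ge1; split; last exact: cheb_radiusE.
move=> D; split=> [[dsD farD]|->].
  apply: contrapT => D_neqJ; have := far_radius_gt n_gt0 p_ge1 dsD D_neqJ.
  by rewrite farD cheb_radiusE // ltxx.
by split; [exact: Jmx_ds | rewrite far_radius_Jmx // cheb_radiusE].
Qed.
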